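(* Let $\mathcal{D}$ be a $\{K_3,K_4\}$-decomposition of $K_{18}$ with $\alpha=13$, let $W$ be the set of vertices $x$ with $\alpha_x\ge 2$, and for $i\in\{0,1,2,3\}$ let $t_i$ be the number of copies of $K_3$ in $\mathcal{D}$ having exactly $i$ vertices in $W$. Then $(t_0,t_1,t_2,t_3)\neq(0,2,7,4)$.
   Context: A $\{K_3,K_4\}$-decomposition of $K_v$ is a collection of subgraphs, each isomorphic to $K_3$ or $K_4$, such that every edge of $K_v$ lies in exactly one of them. $\alpha$ is the number of copies of $K_3$ in the decomposition, and for a vertex $x$, $\alpha_x$ is the number of copies of $K_3$ in the decomposition containing $x$. *)

From mathcomp Require Import all_boot.
Set Implicit Arguments. Unset Strict Implicit. Unset Printing Implicit Defensive.

(* Each copy of K3/K4 is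
   represented by its vertex set (a 3- or 4-subset); edge-disjointness forces
   distinct copies to have distinct vertex sets, so a set of blocks suffices. *)
Definition K34_decomposition (v : nat) (D : {set {set 'I_v}}) : Prop :=
  (forall B, B \in D -> (#|B| == 3) || (#|B| == 4)) /\
  (forall x y : 'I_v, x != y ->
     #|[set B in D | (x \in B) && (y \in B)]| = 1).

Definition triangles (v : nat) (D : {set {set 'I_v}}) : {set {set 'I_v}} :=
  [set B in D | #|B| == 3].

Definition alpha (v : nat) (D : {set {set 'I_v}}) : nat := #|triangles D|.

Definition alpha_x (v : nat) (D : {set {set 'I_v}}) (x : 'I_v) : nat :=
  #|[set B in triangles D | x \in B]|.

Definition Wset (v : nat) (D : {set {set 'I_v}}) : {set 'I_v} :=
  [set x | 2 <= alpha_x D x].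

Definition t_count (v : nat) (D : {set {set 'I_v}}) (i : nat) : nat :=
  #|[set B in triangles D | #|B :&: Wset D| == i]|.

From mathcomp Require Import all_boot zify.
Set Implicit Arguments. Unset Strict Implicit. Unset Printing Implicit Defensive.

(* Counting the 17 edges at a vertex x gives 2 alpha_x + 3 beta_x = 17, where
   beta_x is the number of K4s through x.  The profile (0,2,7,4) then forces
   |W| = 7, alpha_x = 4 on W and alpha_x = 1 off W, and counting the 21 pairs
   inside W shows that every K4 meets W in one or two vertices.  Let u be the
   vertex of W of one of the two triangles T meeting W once.  A K4 through u
   meeting W twice would have both its vertices outside W in the other such
   triangle, so no such K4 exists and the three other triangles through u lie
   inside W.  Doing the same for the second triangle T' and its vertex u', the
   six triangles obtained are among the four triangles inside W, so two of them
   share both u and u' (or T' passes through u = u'): a contradiction. *)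

Lemma eq_of_leq_of_sum_eq (I : finType) (P : pred I) (f g : I -> nat) :
  (forall i, P i -> f i <= g i) ->
  \sum_(i | P i) f i = \sum_(i | P i) g i -> forall i, P i -> f i = g i.
Proof.
move=> le_fg eq_sum i Pi.
have [_] := leqif_sum (fun j Pj => leqif_eq (le_fg j Pj)).
by rewrite eq_sum eqxx => /esym/forall_inP/(_ i Pi)/eqP.
Qed.

Lemma card_set_in_sum (T : finType) (A : {set T}) (P : pred T) :
  #|[set x in A | P x]| = \sum_(x in A) P x.
Proof.
rewrite -sum1_card; transitivity (\sum_(x in A | P x) 1).
  by apply: eq_bigl => x; rewrite inE.
by rewrite big_mkcondr; apply: eq_bigr => x _; case: (P x).
Qed.

Lemma incidence_double_count (T : finType) (X : {set {set T}}) (S : {set T}) :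
  \sum_(x in S) #|[set B in X | x \in B]| = \sum_(B in X) #|B :&: S|.
Proof.
under eq_bigr do rewrite card_set_in_sum.
rewrite exchange_big; apply: eq_bigr => B _.
by rewrite setIC -card_set_in_sum; congr #|_|; apply/setP => x; rewrite !inE.
Qed.

Lemma card_setI_D1 (T : finType) (B S : {set T}) x :
  x \in B -> x \in S -> #|B :&: S| = (#|B :&: (S :\ x)|).+1.
Proof. by move=> xB xS; rewrite setIDA (cardsD1 x (B :&: S)) inE xB xS. Qed.

Definition K4_blocks v (D : {set {set 'I_v}}) : {set {set 'I_v}} :=
  [set B in D | #|B| == 4].

Definition beta_x v (D : {set {set 'I_v}}) (x : 'I_v) : nat :=
  #|[set B in K4_blocks D | x \in B]|.

Section Decomposition.

Variables (v : nat) (D : {set {set 'I_v}}).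
Hypothesis decD : K34_decomposition D.

Lemma block_eq_of_pair x y B C : x != y -> B \in D -> C \in D ->
  x \in B -> y \in B -> x \in C -> y \in C -> B = C.
Proof.
move=> xy DB DC xB yB xC yC; have [_ /(_ x y xy)/eqP/cards1P[B0 E]] := decD.
have eqB0 A : A \in D -> x \in A -> y \in A -> A = B0.
  by move=> DA xA yA; apply/set1P; rewrite -E inE DA xA yA.
by rewrite (eqB0 B) // (eqB0 C).
Qed.

Lemma sum_blocks_through x S :
  \sum_(B in D | x \in B) #|B :&: (S :\ x)| = #|S :\ x|.
Proof.
have [_ pair_once] := decD.
transitivity (\sum_(B in [set B in D | x \in B]) #|B :&: (S :\ x)|).
  by apply: eq_bigl => B; rewrite inE.
rewrite -incidence_double_count -sum1_card; apply: eq_bigr => y.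
rewrite !inE => /andP[yx _]; have xy : x != y by rewrite eq_sym.
rewrite -[RHS](pair_once x y xy).
by apply: eq_card => B; rewrite !inE andbA.
Qed.

Lemma big_blocks_split (P : pred {set 'I_v}) (F : {set 'I_v} -> nat) :
  \sum_(B in D | P B) F B =
  \sum_(B in triangles D | P B) F B + \sum_(B in K4_blocks D | P B) F B.
Proof.
have [card34 _] := decD.
rewrite (bigID (fun B : {set 'I_v} => #|B| == 3)) /=; congr (_ + _).
  by apply: eq_bigl => B; rewrite !inE andbAC.
apply: eq_bigl => B; rewrite !inE andbAC; case DB: (B \in D) => //=.
by case/orP: (card34 B DB) => /eqP ->.
Qed.

Lemma sum_triangles_K4_blocks_through x S :
  \sum_(B in triangles D | x \in B) #|B :&: (S :\ x)| +
  \sum_(B in K4_blocks D | x \in B) #|B :&: (S :\ x)| = #|S :\ x|.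
Proof. by rewrite -big_blocks_split sum_blocks_through. Qed.

Lemma triangle_K4_share_le1 T Q x y : T \in triangles D -> Q \in K4_blocks D ->
  x \in T -> y \in T -> x \in Q -> y \in Q -> x = y.
Proof.
rewrite !inE => /andP[DT /eqP T3] /andP[DQ /eqP Q4] xT yT xQ yQ.
case: (eqVneq x y) => // xy; have TQ := block_eq_of_pair xy DT DQ xT yT xQ yQ.
by move: T3; rewrite TQ Q4.
Qed.

Lemma degree_equation x : 2 * alpha_x D x + 3 * beta_x D x = v.-1.
Proof.
have card_block_D1 (B : {set 'I_v}) : x \in B -> #|B :&: ([set: 'I_v] :\ x)| = #|B|.-1.
  by move=> xB; rewrite -[in RHS](setIT B) (card_setI_D1 xB (in_setT x)).
have := sum_triangles_K4_blocks_through x setT.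
rewrite (eq_bigr (fun _ => 2)) => [|B /andP[]]; last first.
  by rewrite inE => /andP[_ /eqP B3] xB; rewrite card_block_D1 // B3.
rewrite [X in _ + X](eq_bigr (fun _ => 3)) => [|B /andP[]]; last first.
  by rewrite inE => /andP[_ /eqP B4] xB; rewrite card_block_D1 // B4.
rewrite !sum_nat_cond_const (mulnC 2) (mulnC 3) => ->; have := cardsD1 x [set: 'I_v].
by rewrite cardsT card_ord in_setT add1n => v_eq; rewrite [in RHS]v_eq.
Qed.

Lemma sum_triangles_by_t_count (F : nat -> nat) :
  \sum_(B in triangles D) F #|B :&: Wset D| = \sum_(i < 4) F i * t_count D i.
Proof.
have ltW B : B \in triangles D -> #|B :&: Wset D| < 4.
  by rewrite inE => /andP[_ /eqP B3]; rewrite ltnS -B3 subset_leq_card ?subsetIl.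
rewrite (partition_big (fun B => inord #|B :&: Wset D| : 'I_4) xpredT) //=.
apply: eq_bigr => i _; rewrite mulnC /t_count -sum_nat_cond_const.
apply: eq_big => [B | B /andP[Bt /eqP <-]]; last by rewrite inordK ?ltW.
by case Bt: (B \in triangles D); rewrite //= -val_eqE /= inordK ?ltW.
Qed.

Lemma sum_blocks_pairs S :
  \sum_(B in D) #|B :&: S| * (#|B :&: S|).-1 = #|S| * (#|S|).-1.
Proof.
transitivity (\sum_(x in S) \sum_(B in D | x \in B) #|B :&: (S :\ x)|); last first.
  rewrite (eq_bigr (fun _ => (#|S|).-1)) ?sum_nat_const // => x xS.
  by rewrite sum_blocks_through (cardsD1 x S) xS.
rewrite (exchange_big_dep (fun B => B \in D)) /=; last by move=> x B _ /andP[].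
apply: eq_bigr => B DB.
rewrite (eq_bigr (fun _ => (#|B :&: S|).-1)) => [|x /andP[xS /andP[_ xB]]]; last first.
  by rewrite (card_setI_D1 xB xS).
by rewrite sum_nat_cond_const; congr (_ * _); apply: eq_card => x; rewrite !inE DB andbC.
Qed.

End Decomposition.

Section Profile0274.

Variable D : {set {set 'I_18}}.
Hypothesis decD : K34_decomposition D.
Hypotheses (t0 : t_count D 0 = 0) (t1 : t_count D 1 = 2)
           (t2 : t_count D 2 = 7) (t3 : t_count D 3 = 4).

Local Notation W := (Wset D).
Local Notation tri_W i := [set B in triangles D | #|B :&: Wset D| == i].
Local Notation tri_at x := [set B in triangles D | x \in B].

Lemma alpha_x_gt0 x : 0 < alpha_x D x.
Proof. by have := degree_equation decD x; lia. Qed.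

Lemma alpha_x_W_ge4 x : x \in W -> 4 <= alpha_x D x.
Proof. by rewrite inE; have := degree_equation decD x; lia. Qed.

Lemma sum_alpha_x_W : \sum_(x in W) alpha_x D x = 28.
Proof.
rewrite (incidence_double_count (triangles D)) (sum_triangles_by_t_count D id).
by rewrite !big_ord_recr big_ord0 /= t1 t2 t3.
Qed.

Lemma sum_alpha_x_notW : \sum_(x in ~: W) alpha_x D x = 11.
Proof.
rewrite (incidence_double_count (triangles D)).
rewrite (eq_bigr (fun B => 3 - #|B :&: W|)) => [|B]; last first.
  by rewrite inE => /andP[_ /eqP B3]; have := cardsID W B; rewrite B3 setDE; lia.
rewrite (sum_triangles_by_t_count D (fun i => 3 - i)).
by rewrite !big_ord_recr big_ord0 /= t0 t1 t2.
Qed.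

Lemma card_W : #|W| = 7.
Proof.
have le_W : #|W| * 4 <= \sum_(x in W) alpha_x D x.
  by rewrite -sum_nat_const; apply: leq_sum alpha_x_W_ge4.
have le_notW : #|~: W| <= \sum_(x in ~: W) alpha_x D x.
  by rewrite -sum1_card; apply: leq_sum => x _; apply: alpha_x_gt0.
move: le_W le_notW; rewrite sum_alpha_x_W sum_alpha_x_notW.
by have := cardsC W; rewrite card_ord; lia.
Qed.

Lemma card_notW : #|~: W| = 11.
Proof. by have := cardsC W; rewrite card_ord card_W; lia. Qed.

Lemma alpha_x_W x : x \in W -> alpha_x D x = 4.
Proof.
move=> xW; symmetry; apply: (eq_of_leq_of_sum_eq (P := mem W)) xW => [y|].
  exact: alpha_x_W_ge4.
by rewrite sum_alpha_x_W sum_nat_const card_W.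
Qed.

Lemma alpha_x_notW x : x \notin W -> alpha_x D x = 1.
Proof.
rewrite -in_setC => xW; symmetry.
apply: (eq_of_leq_of_sum_eq (P := mem (~: W))) xW => [y _|].
  exact: alpha_x_gt0.
by rewrite sum_alpha_x_notW sum_nat_const card_notW.
Qed.

Lemma beta_x_W x : x \in W -> beta_x D x = 3.
Proof. by move=> xW; have := degree_equation decD x; rewrite alpha_x_W //; lia. Qed.

Lemma beta_x_notW x : x \notin W -> beta_x D x = 5.
Proof. by move=> xW; have := degree_equation decD x; rewrite alpha_x_notW //; lia. Qed.

Lemma sum_K4_meet_W : \sum_(B in K4_blocks D) #|B :&: W| = 21.
Proof.
rewrite -incidence_double_count (eq_bigr (fun _ => 3)) => [|x]; last exact: beta_x_W.
by rewrite sum_nat_const card_W.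
Qed.

Lemma card_K4_blocks : #|K4_blocks D| = 19.
Proof.
have meet_notW : \sum_(B in K4_blocks D) #|B :&: ~: W| = 55.
  rewrite -incidence_double_count (eq_bigr (fun _ => 5)) => [|x]; last first.
    by rewrite in_setC; apply: beta_x_notW.
  by rewrite sum_nat_const card_notW.
have : \sum_(B in K4_blocks D) (#|B :&: W| + #|B :&: ~: W|) = \sum_(B in K4_blocks D) 4.
  by apply: eq_bigr => B; rewrite inE -setDE cardsID => /andP[_ /eqP].
rewrite big_split /= sum_K4_meet_W meet_notW sum_nat_const => sum4.
by apply/eqP; rewrite -(eqn_pmul2r (_ : 0 < 4)) //; apply/eqP; exact: esym sum4.
Qed.

Lemma sum_K4_pairs_W : \sum_(B in K4_blocks D) #|B :&: W| * (#|B :&: W|).-1 = 4.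
Proof.
have := sum_blocks_pairs decD W; rewrite card_W -big_condT big_blocks_split // !big_condT.
rewrite (sum_triangles_by_t_count D (fun i => i * i.-1)).
by rewrite !big_ord_recr big_ord0 /= t2 t3; lia.
Qed.

(* [2 k <= k (k - 1) + 2] with equality iff [k] is 1 or 2; summed over the 19
   K4s both sides are 42, so equality holds for every K4. *)
Lemma K4_meet_W B : B \in K4_blocks D -> #|B :&: W| = 1 \/ #|B :&: W| = 2.
Proof.
pose k C := #|C :&: W|.
have eq_all : forall C, C \in K4_blocks D -> 2 * k C = k C * (k C).-1 + 2.
  apply: (eq_of_leq_of_sum_eq (f := fun C => 2 * k C)) => [C _|].
    by case: (k C) => [|n] /=; nia.
  rewrite -big_distrr big_split /= sum_K4_meet_W sum_K4_pairs_W sum_nat_const.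
  by rewrite card_K4_blocks.
by move/eq_all; rewrite /k; case: #|B :&: W| => [|[|[|n]]] //=; nia.
Qed.

(* Of the 7 vertices of W, the K4s through y reach at least 2 + 4, leaving at
   most one for its unique triangle. *)
Lemma triangle_through_notW y Q : y \notin W -> Q \in K4_blocks D -> y \in Q ->
  #|Q :&: W| = 2 -> exists2 T, T \in tri_W 1 & y \in T.
Proof.
move=> yW QK yQ QW2; have /eqP/cards1P[T tri_y] := alpha_x_notW yW.
have /andP[Tt yT] : (T \in triangles D) && (y \in T).
  by have := set11 T; rewrite -tri_y inE.
exists T => //; rewrite inE; apply/andP; split=> //.
have T_meets_W : 0 < #|T :&: W|.
  have /eqP := t0; rewrite cards_eq0 => /eqP/setP/(_ T).
  by rewrite in_set0 inE Tt lt0n /= => ->.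
have K4_part : 6 <= \sum_(B in K4_blocks D | y \in B) #|B :&: W|.
  have := beta_x_notW yW; rewrite /beta_x -sum1dep_card.
  rewrite (bigD1 Q) /=; last by rewrite QK yQ.
  rewrite [X in _ <= X](bigD1 Q) /=; last by rewrite QK yQ.
  rewrite QW2 add1n => -[sum1]; rewrite -[6]/(2 + 4) leq_add2l.
  apply: leq_trans (eq_leq (esym sum1)) _.
  by apply: leq_sum => B /andP[/andP[BK _] _]; case: (K4_meet_W BK) => ->.
have := sum_triangles_K4_blocks_through decD y W.
have -> : W :\ y = W.
  by apply/setP => z; rewrite in_setD1; case: eqP => // ->; rewrite (negbTE yW).
rewrite card_W (eq_bigl (pred1 T)) => [|B]; last by rewrite /= -in_set1 -tri_y inE.
by rewrite big_pred1_eq; lia.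
Qed.

(* Both vertices of Q outside W lie in triangles of tri_W 1 other than T
   (which cannot meet Q again), hence in the same triangle. *)
Lemma K4_meet_W_ne2 T u Q : T \in tri_W 1 -> u \in T -> u \in W ->
  Q \in K4_blocks D -> u \in Q -> #|Q :&: W| != 2.
Proof.
move=> T1 uT uW QK uQ; apply/eqP => QW2.
have := T1; rewrite inE => /andP[Tt _].
have /card_gt1P[y [y' [yQW y'QW yy']]] : 1 < #|Q :\: W|.
  by move: QK; rewrite inE => /andP[_ /eqP Q4]; have := cardsID W Q; rewrite Q4 QW2; lia.
move: yQW y'QW; rewrite !in_setD => /andP[yW yQ] /andP[y'W y'Q].
have other_tri z : z \notin W -> z \in Q -> exists2 Tz, Tz \in tri_W 1 :\ T & z \in Tz.
  move=> zW zQ; have [Tz Tz1 zTz] := triangle_through_notW zW QK zQ QW2.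
  exists Tz => //; rewrite in_setD1 Tz1 andbT; apply: contraNneq zW => TzT.
  have zT : z \in T by rewrite -TzT.
  by rewrite -(triangle_K4_share_le1 decD Tt QK uT zT uQ zQ).
have /cards1P[T' rest_eq] : #|tri_W 1 :\ T| == 1.
  have card_tri_W1 : #|tri_W 1| = 2 := t1.
  by have := cardsD1 T (tri_W 1); rewrite card_tri_W1 T1 add1n => -[<-].
have T't : T' \in triangles D.
  by have := set11 T'; rewrite -rest_eq in_setD1 inE => /and3P[_ ->].
have in_T' z Tz : Tz \in tri_W 1 :\ T -> z \in Tz -> z \in T'.
  by rewrite rest_eq inE => /eqP ->.
have [Ty Ty1 yTy] := other_tri y yW yQ.
have [Ty' Ty'1 y'Ty'] := other_tri y' y'W y'Q.
move/eqP: yy'; apply.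
exact: (triangle_K4_share_le1 decD T't QK (in_T' _ _ Ty1 yTy) (in_T' _ _ Ty'1 y'Ty')).
Qed.

Lemma card_tri_atD1 u T : u \in W -> T \in triangles D -> u \in T ->
  #|tri_at u :\ T| = 3.
Proof.
move=> uW Tt uT; have := alpha_x_W uW.
by rewrite /alpha_x (cardsD1 T) inE Tt uT add1n => -[].
Qed.

(* The K4s through u and T contain no other vertex of W, so the six others are
   covered by the three remaining triangles through u, two by each. *)
Lemma tri_atD1_subset_tri_W3 T u : T \in tri_W 1 -> u \in T -> u \in W ->
  tri_at u :\ T \subset tri_W 3.
Proof.
move=> T1 uT uW; have := T1; rewrite inE => /andP[Tt /eqP TW1].
have K4_part : \sum_(Q in K4_blocks D | u \in Q) #|Q :&: (W :\ u)| = 0.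
  apply/eqP; rewrite sum_nat_eq0; apply/forall_inP => Q /andP[QK uQ].
  have := K4_meet_W_ne2 T1 uT uW QK uQ.
  by case: (K4_meet_W QK); rewrite (card_setI_D1 uQ uW) => -[->].
have := sum_triangles_K4_blocks_through decD u W; rewrite K4_part addn0.
rewrite (bigD1 T) /=; last by rewrite Tt uT.
move: TW1; rewrite (card_setI_D1 uT uW) => -[->]; rewrite add0n.
have -> : #|W :\ u| = 6 by have := cardsD1 u W; rewrite uW card_W add1n => -[].
move=> sum6.
have in_W_but_u : forall B, B \in tri_at u :\ T -> #|B :&: (W :\ u)| = 2.
  apply: (eq_of_leq_of_sum_eq (f := fun B => #|B :&: (W :\ u)|)) => [B|].
    rewrite in_setD1 inE => /and3P[_ Bt uB].
    have /[!inE]/andP[_ /eqP B3] := Bt.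
    have := subset_leq_card (subsetIl B W).
    by rewrite B3 (card_setI_D1 uB uW).
  rewrite sum_nat_const card_tri_atD1 //; apply: etrans sum6.
  by apply: eq_bigl => B; rewrite in_setD1 inE andbC.
apply/subsetP => B BA; have := in_W_but_u B BA.
move: BA; rewrite in_setD1 inE => /and3P[_ Bt uB].
by rewrite inE Bt (card_setI_D1 uB uW) => ->.
Qed.

Lemma profile_0274_contradiction : False.
Proof.
have /cards2P[T [T' [TT' tri_W1_eq]]] : #|tri_W 1| == 2 by apply/eqP; exact: t1.
have T1 : T \in tri_W 1 by rewrite tri_W1_eq !inE eqxx.
have T'1 : T' \in tri_W 1 by rewrite tri_W1_eq !inE eqxx orbT.
have W_vertex B : B \in tri_W 1 -> exists2 u, u \in B & u \in W.
  rewrite inE => /andP[_ /eqP BW1]; have /card_gt0P[u] : 0 < #|B :&: W| by rewrite BW1.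
  by rewrite in_setI => /andP[]; exists u.
have [u uT uW] := W_vertex T T1.
have [u' uT' uW'] := W_vertex T' T'1.
have sub := tri_atD1_subset_tri_W3 T1 uT uW.
have sub' := tri_atD1_subset_tri_W3 T'1 uT' uW'.
have := T1; rewrite inE => /andP[Tt _].
have := T'1; rewrite inE => /andP[T't /eqP T'W1].
case: (eqVneq u u') => [eq_uu' | uu'].
  have : T' \in tri_at u :\ T by rewrite in_setD1 inE eq_sym TT' T't eq_uu'.
  by move/(subsetP sub); rewrite inE T't T'W1.
have card_tri_W3 : #|tri_W 3| = 4 := t3.
have : #|tri_at u :\ T| + #|tri_at u' :\ T'| <=
       #|tri_W 3| + #|(tri_at u :\ T) :&: (tri_at u' :\ T')|.
  by rewrite -cardsUI leq_add2r subset_leq_card // subUset sub sub'.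
rewrite !card_tri_atD1 // card_tri_W3 -[3 + 3]/(4 + 2) leq_add2l.
case/card_gt1P => B [B' [BAA B'AA BB']].
move: BAA B'AA; rewrite !in_setI !in_setD1 !inE.
move=> /andP[/and3P[_ /andP[DB _] uB] /and3P[_ _ u'B]].
move=> /andP[/and3P[_ /andP[DB' _] uB'] /and3P[_ _ u'B']].
by move/eqP: BB'; apply; apply: (block_eq_of_pair decD uu').
Qed.

End Profile0274.

Theorem mainTheorem15 (D : {set {set 'I_18}}) :
  K34_decomposition D -> alpha D = 13 ->
  (t_count D 0, t_count D 1, t_count D 2, t_count D 3) <> (0, 2, 7, 4).
Proof.
move=> decD _ [t0 t1 t2 t3].
exact: (profile_0274_contradiction decD t0 t1 t2 t3).
Qed.
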